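(* Let $N\ge 2$ and let $X\subseteq \mathbb{Z}_N^2$ with $|X|=2N+1$. Suppose there is $a\in\mathbb{Z}_N$ such that $X$ contains every element of the row $\{a\}\times\mathbb{Z}_N$. Then there exists $S\subseteq X$ with $|S|=N$ and $\sum_{s\in S}s=(0,0)$.
   Context: For $a\in\mathbb{Z}_N$, the row $a$ of $\mathbb{Z}_N^2$ is the set $\{a\}\times\mathbb{Z}_N=\{(a,y):y\in\mathbb{Z}_N\}$. *)

From mathcomp Require Import all_boot all_algebra.
Set Implicit Arguments. Unset Strict Implicit. Unset Printing Implicit Defensive.
Import GRing.Theory.
Local Open Scope ring_scope.

Definition row_set (N : nat) (a : 'Z_N) : {set 'Z_N * 'Z_N} :=
  [set x | x.1 == a].

From mathcomp Require Import all_boot all_algebra.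
From mathcomp Require Import zify.
Set Implicit Arguments. Unset Strict Implicit. Unset Printing Implicit Defensive.
Import GRing.Theory.
Local Open Scope ring_scope.

(* Put O := X \ row_set a; it has N + 1 points, none in row a.
   1. (Zero-sum lemma, any finite Z-module V.)  If f : D -> V takes two
      different values and #|V| <= #|D| + 1, then some nonempty E of D with
      #|E| < #|V| has f-sum 0: list D as u, v, ..., and apply the pigeonhole
      principle to the sums over the #|V| prefixes of lengths 0 .. #|V|-1
      together with the singleton {v}; any two of these sets with equal sums
      are nested (except {u} and {v}, whose sums differ), and their difference
      is the required E.
   2. O does not lie in a single row, so 1. applied to f x := x.1 - a gives
      T in O with 0 < #|T| < N and sum of first coordinates a * #|T|.
   3. Any residue is the sum of m distinct elements of Z_N when 0 < m < N;
      so T can be completed by N - #|T| points of row a whose second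
      coordinates cancel the second coordinates of T, while the first
      coordinates add up to a * N = 0. *)

Lemma sum_setD_eq0 (T : finType) (V : zmodType) (f : T -> V) (A B : {set T}) :
  A \subset B -> \sum_(x in A) f x = \sum_(x in B) f x ->
  \sum_(x in B :\: A) f x = 0.
Proof.
move=> AB eqAB; apply: (@addIr _ (\sum_(x in A) f x)).
by rewrite add0r [RHS]eqAB [in RHS](big_setID A) /= (setIidPr AB) addrC.
Qed.

Section PrefixSets.
Variables (T : finType) (s : seq T).
Hypothesis s_uniq : uniq s.

Definition prefix_set (k : nat) : {set T} := [set x in take k s].

Lemma card_prefix_set k : (k <= size s)%N -> #|prefix_set k| = k.
Proof.
move=> ks; rewrite cardsE (card_uniqP _) ?take_uniq //.
exact: size_takel.
Qed.

Lemma prefix_set_mono i j : (i <= j)%N -> prefix_set i \subset prefix_set j.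
Proof.
move=> ij; apply/subsetP => x; rewrite !inE -(take_takel s ij).
exact: mem_take.
Qed.

End PrefixSets.

Lemma zero_sum_subset (T : finType) (V : finZmodType) (f : T -> V)
    (D : {set T}) (u v : T) :
  u \in D -> v \in D -> f u != f v -> (#|V| <= #|D|.+1)%N ->
  exists E : {set T},
    [/\ E \subset D, (0 < #|E|)%N, (#|E| < #|V|)%N & \sum_(x in E) f x = 0].
Proof.
move=> uD vD fuv cardV.
have uv : u != v by apply: contraNneq fuv => ->.
set s := [:: u, v & enum (D :\: [set u; v])].
have s_uniq : uniq s.
  by rewrite /= enum_uniq andbT !(mem_enum, inE) !eqxx /= orbT (negbTE uv).
have sD : {subset s <= D}.
  by move=> x; rewrite !inE mem_enum inE => /or3P [/eqP-> | /eqP-> | /andP []].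
have size_s : size s = #|D|.
  have uvD : [set u; v] \subset D by apply/subsetP => x /set2P [] ->.
  have := subset_leq_card uvD.
  by rewrite /= -cardE cardsD (setIidPr uvD) cards2 uv /=; lia.
have nested (A B : {set T}) : A \subset B -> B \subset D -> (#|A| < #|B| < #|V|)%N ->
    \sum_(x in A) f x = \sum_(x in B) f x ->
    exists E : {set T},
      [/\ E \subset D, (0 < #|E|)%N, (#|E| < #|V|)%N & \sum_(x in E) f x = 0].
  move=> AB BD /andP [ltAB ltBV] eqAB; exists (B :\: A); split.
  - exact: subset_trans (subsetDl B A) BD.
  - by rewrite cardsD (setIidPr AB) subn_gt0.
  - by rewrite cardsD (setIidPr AB); exact: leq_ltn_trans (leq_subr _ _) ltBV.
  - exact: sum_setD_eq0.
have prefixD k : prefix_set s k \subset D.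
  by apply/subsetP => x; rewrite inE => /mem_take /sD.
have card_prefix k : (k < #|V|)%N -> #|prefix_set s k| = k.
  by move=> kV; apply: card_prefix_set; rewrite // size_s; lia.
(* The #|V| + 1 candidate sets: all short prefixes, and {v}. *)
pose P (k : option 'I_#|V|) := if k is Some i then prefix_set s i else [set v].
have /injectivePn [k1 [k2 k12 eq_sums]] :
    ~~ injectiveb (fun k => \sum_(x in P k) f x).
  by apply/injectiveP => /leq_card; rewrite card_option card_ord ltnn.
(* A prefix with the same sum as {v}: length 0 makes {v} itself zero-sum,
   length 1 is excluded as f u != f v, longer prefixes contain v. *)
have with_v (i : 'I_#|V|) : \sum_(x in [set v]) f x = \sum_(x in P (Some i)) f x ->
    exists E : {set T},
      [/\ E \subset D, (0 < #|E|)%N, (#|E| < #|V|)%N & \sum_(x in E) f x = 0].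
  rewrite big_set1 /=; case: i => [[|[|i]] /= iV] eq_v.
  - have V_gt1 : (1 < #|V|)%N by have := max_card [set f u; f v]; rewrite cards2 fuv.
    exists [set v]; rewrite sub1set vD cards1 big_set1 eq_v; split=> //.
    by rewrite /prefix_set take0 big_pred0 // => x; rewrite inE.
  - suff : f v = f u by move/eqP; rewrite eq_sym (negbTE fuv).
    rewrite eq_v (_ : prefix_set s 1 = [set u]) ?big_set1 //.
    by apply/setP => x; rewrite !inE.
  - apply: (nested [set v] (prefix_set s i.+2)); rewrite ?big_set1 ?cards1 ?card_prefix //.
    by rewrite sub1set !inE eqxx orbT.
case: k1 k2 k12 eq_sums => [i|] [j|] //= k12 eq_sums.
- case: (ltngtP i j) => [ltij | ltji | eqij].
  + apply: (nested _ _ (prefix_set_mono s (ltnW ltij)) (prefixD j) _ eq_sums).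
    by rewrite !card_prefix // ltij /=.
  + apply: (nested _ _ (prefix_set_mono s (ltnW ltji)) (prefixD i) _ (esym eq_sums)).
    by rewrite !card_prefix // ltji /=.
  + by move: k12; rewrite (val_inj eqij) eqxx.
- exact: with_v i (esym eq_sums).
- exact: with_v j eq_sums.
Qed.

Lemma sum_fst (U W : zmodType) (I : finType) (P : pred I) (F : I -> U * W) :
  (\sum_(i | P i) F i).1 = \sum_(i | P i) (F i).1.
Proof. exact: (big_morph fst). Qed.

Lemma sum_snd (U W : zmodType) (I : finType) (P : pred I) (F : I -> U * W) :
  (\sum_(i | P i) F i).2 = \sum_(i | P i) (F i).2.
Proof. exact: (big_morph snd). Qed.

Section ZmodRows.
Variables (N : nat).
Hypothesis N_gt1 : (1 < N)%N.

Lemma card_Zmod : #|'Z_N| = N.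
Proof. by rewrite card_ord Zp_cast. Qed.

Lemma card_row_set (c : 'Z_N) : #|row_set c| = N.
Proof.
have -> : row_set c = [set (c, y) | y : 'Z_N].
  apply/setP => -[x y]; rewrite inE /=; apply/eqP/imsetP => [-> | [z _ [-> _]]] //.
  by exists y.
by rewrite card_imset ?card_Zmod // => y1 y2 [].
Qed.

Lemma exists_succ_out (R : {set 'Z_N}) :
  (0 < #|R| < N)%N -> exists2 x, x \in R & x + 1 \notin R.
Proof.
case/andP => /card_gt0P [x0 x0R] ltRN.
apply/exists_inP; apply: contraLR ltRN; rewrite negb_exists_in -leqNgt.
move=> /forall_inP succR.
have shiftR (k : nat) : x0 + k%:R \in R.
  elim: k => [|k IHk]; first by rewrite addr0.
  by rewrite mulrSr addrA; have := succR _ IHk; rewrite negbK.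
suff -> : R = setT by rewrite cardsT card_Zmod.
apply/setP => y; rewrite inE -(subrK x0 y) -(natr_Zp (y - x0)) addrC.
exact: shiftR.
Qed.

(* Moving one element x to x + 1 raises the sum of an m-set by one. *)
Lemma subset_sum_succ (R : {set 'Z_N}) : (0 < #|R| < N)%N ->
  exists R' : {set 'Z_N}, #|R'| = #|R| /\ \sum_(r in R') r = \sum_(r in R) r + 1.
Proof.
move=> /exists_succ_out [x xR x1R].
have x1_out : x + 1 \notin R :\ x by rewrite in_setD1 (negbTE x1R) andbF.
exists ((x + 1) |: (R :\ x)); split.
  by rewrite cardsU1 x1_out (cardsD1 x R) xR.
by rewrite big_setU1 //= (big_setD1 x xR) /= addrAC addrC.
Qed.

Lemma subset_sums (m : nat) (c : 'Z_N) : (0 < m < N)%N ->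
  exists R : {set 'Z_N}, #|R| = m /\ \sum_(r in R) r = c.
Proof.
move=> mN; pose R0 := [set x in take m (enum 'Z_N)].
have cardR0 : #|R0| = m.
  rewrite cardsE (card_uniqP _) ?take_uniq ?enum_uniq // size_takel //.
  by rewrite -cardE card_Zmod; lia.
have reach (k : nat) : exists R : {set 'Z_N},
    #|R| = m /\ \sum_(r in R) r = \sum_(r in R0) r + k%:R.
  elim: k => [|k [R [cardR sumR]]]; first by exists R0; rewrite addr0.
  have := @subset_sum_succ R; rewrite cardR => /(_ mN) [R' [cardR' sumR']].
  by exists R'; rewrite cardR' sumR' sumR mulrSr addrA.
have [R [cardR sumR]] := reach (c - \sum_(r in R0) r)%R.
by exists R; rewrite sumR natr_Zp addrC subrK.
Qed.

Lemma extend_by_row (X : {set 'Z_N * 'Z_N}) (a : 'Z_N) (T : {set 'Z_N * 'Z_N}) :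
  row_set a \subset X -> T \subset X :\: row_set a -> (0 < #|T| < N)%N ->
  \sum_(x in T) (x.1 - a) = 0 ->
  exists S : {set 'Z_N * 'Z_N}, [/\ S \subset X, #|S| = N & \sum_(s in S) s = 0].
Proof.
move=> rowX TO cardT sumT.
have /andP [T_gt0 T_ltN] := cardT.
have mN : (0 < N - #|T| < N)%N by lia.
have [R [cardR sumR]] := subset_sums (- \sum_(x in T) x.2) mN.
pose Rr := [set (a, r) | r in R].
have cardRr : #|Rr| = (N - #|T|)%N by rewrite card_imset // => y1 y2 [].
have TRr : [disjoint T & Rr].
  rewrite -setI_eq0; apply/eqP/setP => x; rewrite !inE.
  apply/negbTE/andP => -[/(subsetP TO)]; rewrite !inE => /andP [xa _] /imsetP [r _ xr].
  by rewrite xr eqxx in xa.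
have fstT : \sum_(x in T) x.1 = a *+ #|T|.
  by apply/eqP; rewrite -subr_eq0 -sumr_const -sumrB sumT.
exists (T :|: Rr); split.
- rewrite subUset (subset_trans TO (subsetDl _ _)) /=.
  by apply/subsetP => y /imsetP [r _ ->]; apply: (subsetP rowX); rewrite inE.
- by rewrite cardsU (disjoint_setI0 TRr) cards0 subn0 cardRr; lia.
- rewrite (eq_bigl [predU T & Rr]) => [|x]; last by rewrite !inE.
  rewrite bigU // big_imset /=; last by move=> y1 y2 _ _ [].
  apply/eqP; rewrite xpair_eqE !sum_fst !sum_snd /= sumR subrr eqxx andbT.
  rewrite fstT sumr_const cardR -mulrnDr subnKC ?(ltnW T_ltN) //.
  by rewrite -mulr_natr (pchar_Zp N_gt1) mulr0.
Qed.

End ZmodRows.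

Theorem theorem3p1 (N : nat) (hN : (1 < N)%N) (X : {set 'Z_N * 'Z_N})
  (hX : #|X| = (2 * N).+1) (a : 'Z_N) (ha : row_set a \subset X) :
  exists S : {set 'Z_N * 'Z_N},
    [/\ S \subset X, #|S| = N & \sum_(s in S) s = 0].
Proof.
set O := X :\: row_set a.
have cardO : #|O| = N.+1.
  by rewrite cardsD (setIidPr ha) card_row_set // hX; lia.
have /card_gt0P [u uO] : (0 < #|O|)%N by rewrite cardO.
have /subsetPn [v vO v_off] : ~~ (O \subset row_set u.1).
  by apply/negP => /subset_leq_card; rewrite cardO card_row_set // ltnn.
have fuv : u.1 - a != v.1 - a.
  by apply: contra v_off; rewrite inE => /eqP /addIr ->.
have cardZO : (#|'Z_N| <= #|O|.+1)%N by rewrite card_Zmod // cardO; lia.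
have [T [TO T_gt0 T_ltN sumT]] :=
  zero_sum_subset (V := 'Z_N) (f := fun x => x.1 - a) uO vO fuv cardZO.
have cardT : (0 < #|T| < N)%N by rewrite T_gt0 -[X in (_ < X)%N](card_Zmod hN).
exact: (extend_by_row hN ha TO cardT sumT).
Qed.
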